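(* Let $\mathsf T$ be the monad on $\mathbf{Grph}=[\mathbb G_1^{\mathrm{op}},\mathbf{Set}]$ whose algebras are involutive graphs. Then $\mathsf T$ is $\Delta_0$-nervous and its underlying endofunctor is $\Delta_0$-induced, but $\mathsf T$ does not have arities $\Delta_0$.
   Context: Here $\mathcal V=\mathbf{Set}$. $\mathbb G_1$ is the category freely generated by two parallel arrows $0\rightrightarrows 1$, so a graph is $s,t\colon X_1\rightrightarrows X_0$. An involutive graph is a graph with an automorphism $i\colon X_1\to X_1$ of order $2$ with $si=t$ (hence $ti=s$); morphisms are graph maps commuting with the involutions; $\mathsf T$ is the monad of the free-forgetful adjunction between involutive graphs and $\mathbf{Grph}$. $\Delta_0$ is the full subcategory of $\mathbf{Grph}$ on the graphs $[n]=(0\to 1\to\cdots\to n)$ for $n\ge 0$; it is small and dense, with inclusion $K$ and nerve $N_K(X)=\mathbf{Grph}(K-,X)$; for a functor $H$ with small domain an $H$-nerve is a presheaf in the essential image of $N_H$. For a monad $\mathsf T$, let $\Delta_0\xrightarrow{J_{\mathsf T}}\mathcal A_{\mathsf T}\xrightarrow{K_{\mathsf T}}\mathbf{Grph}^{\mathsf T}$ be the (identity-on-objects, fully faithful) factorisation of $F^{\mathsf T}K$; $\mathsf T$ is $\Delta_0$-nervous if $K_{\mathsf T}$ is dense (i.e. $N_{K_{\mathsf T}}$ fully faithful) and a presheaf $X$ on $\mathcal A_{\mathsf T}$ is a $K_{\mathsf T}$-nerve iff $X\circ J_{\mathsf T}^{\mathrm{op}}$ is a $K$-nerve. An endofunctor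 $T$ is $\Delta_0$-induced if it is the pointwise left Kan extension along $K$ of $TK$; it has arities $\Delta_0$ if $N_KT$ is the left Kan extension along $K$ of $N_KTK$; a monad has arities $\Delta_0$ if its underlying endofunctor does. *)

From Stdlib Require Import ProofIrrelevance FunctionalExtensionality.
From mathcomp Require Import all_boot.
Set Implicit Arguments. Unset Strict Implicit. Unset Printing Implicit Defensive.

Record graph := Graph { gV : Type; gE : Type; gsrc : gE -> gV; gtgt : gE -> gV }.

Record gmor (X Y : graph) := GMor {
  mV : gV X -> gV Y;
  mE : gE X -> gE Y;
  msrc : forall e, @gsrc Y (mE e) = mV (@gsrc X e);
  mtgt : forall e, @gtgt Y (mE e) = mV (@gtgt X e) }.

Definition gid (X : graph) : gmor X X :=
  @GMor X X id id (fun e => erefl) (fun e => erefl).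

Definition gcomp (X Y Z : graph) (g : gmor Y Z) (f : gmor X Y) : gmor X Z :=
  @GMor X Z (fun v => mV g (mV f v)) (fun e => mE g (mE f e))
    (fun e => eq_trans (msrc g (mE f e)) (f_equal (mV g) (msrc f e)))
    (fun e => eq_trans (mtgt g (mE f e)) (f_equal (mV g) (mtgt f e))).

Lemma gmor_ext (X Y : graph) (f g : gmor X Y) :
  mV f = mV g -> mE f = mE g -> f = g.
Proof.
case: f => fV fE fs ft; case: g => gV' gE' gs gt /= HV HE.
subst; f_equal; apply: proof_irrelevance.
Qed.

(* ---------- The graphs [n] = (0 -> 1 -> ... -> n) of Delta_0 ---------- *)
Definition simp (n : nat) : graph :=
  @Graph 'I_n.+1 'I_n (fun i => widen_ord (leqnSn n) i) (fun i => lift ord0 i).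

Record igraph := IGraph {
  ig :> graph;
  inv : gE ig -> gE ig;
  invK : forall e, inv (inv e) = e;
  src_inv : forall e, @gsrc ig (inv e) = @gtgt ig e }.

Record imor (A B : igraph) := IMor {
  im :> gmor A B;
  im_inv : forall e, mE im (@inv A e) = @inv B (mE im e) }.

Lemma imor_ext (A B : igraph) (f g : imor A B) : im f = im g -> f = g.
Proof. case: f => f Hf; case: g => g Hg /= E; subst; f_equal; apply: proof_irrelevance. Qed.

Definition iid (A : igraph) : imor A A := @IMor A A (gid A) (fun e => erefl).

Definition icomp (A B C : igraph) (g : imor B C) (f : imor A B) : imor A C :=
  @IMor A C (gcomp g f)
    (fun e => eq_trans (f_equal (mE g) (im_inv f e)) (im_inv g (mE f e))).

(* T X has the vertices of X and an edge e' : y -> x for every edge e : x -> y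
   added; T = U F is the monad of the free-forgetful adjunction. *)
Definition Tg (X : graph) : graph :=
  @Graph (gV X) (gE X + gE X)
    (fun e => match e with inl e => @gsrc X e | inr e => @gtgt X e end)
    (fun e => match e with inl e => @gtgt X e | inr e => @gsrc X e end).

Definition swapE (T : Type) (e : T + T) : T + T :=
  match e with inl e => inr e | inr e => inl e end.

Definition Fi (X : graph) : igraph.
Proof.
refine (@IGraph (Tg X) (@swapE (gE X)) _ _); by case.
Defined.

Definition Tmor (X Y : graph) (f : gmor X Y) : gmor (Tg X) (Tg Y).
Proof.
refine (@GMor (Tg X) (Tg Y) (mV f)
   (fun e => match e with inl e => inl (mE f e) | inr e => inr (mE f e) end) _ _);
  case=> e /=; [exact: msrc | exact: mtgt | exact: mtgt | exact: msrc].
Defined.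

Definition Fmor (X Y : graph) (f : gmor X Y) : imor (Fi X) (Fi Y).
Proof. refine (@IMor (Fi X) (Fi Y) (Tmor f) _); by case. Defined.

Lemma Fmor_id (X : graph) : Fmor (gid X) = iid (Fi X).
Proof.
apply: imor_ext; apply: gmor_ext => //=.
by apply: functional_extensionality; case.
Qed.

Lemma Fmor_comp (X Y Z : graph) (g : gmor Y Z) (f : gmor X Y) :
  Fmor (gcomp g f) = icomp (Fmor g) (Fmor f).
Proof.
apply: imor_ext; apply: gmor_ext => //=.
by apply: functional_extensionality; case.
Qed.

Record precat := PreCat {
  hom : nat -> nat -> Type;
  hcomp : forall a b c, hom b c -> hom a b -> hom a c;
  hid : forall a, hom a a }.

Record psh (C : precat) := Psh {
  pobj : nat -> Type;
  pact : forall n m, hom C n m -> pobj m -> pobj n;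
  pact_id : forall n x, pact (hid C n) x = x;
  pact_comp : forall a b c (g : hom C b c) (f : hom C a b) x,
      pact (hcomp g f) x = pact f (pact g x) }.

Record pnat (C : precat) (P Q : psh C) := PNat {
  pcomp : forall n, pobj P n -> pobj Q n;
  pnatural : forall n m (f : hom C n m) x,
      pcomp (pact f x) = pact f (pcomp x) }.

Definition piso (C : precat) (P Q : psh C) : Prop :=
  exists (a : pnat P Q) (b : pnat Q P),
    (forall n (x : pobj P n), pcomp b (pcomp a x) = x) /\
    (forall n (x : pobj Q n), pcomp a (pcomp b x) = x).

Definition Delta0 : precat :=
  @PreCat (fun n m => gmor (simp n) (simp m))
          (fun a b c g f => gcomp g f) (fun a => gid (simp a)).

(* A_T : full subcategory of algebras on the free algebras F[n]
   (J_T is identity on objects, F on morphisms; K_T sends n to F[n]) *)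
Definition AT : precat :=
  @PreCat (fun n m => imor (Fi (simp n)) (Fi (simp m)))
          (fun a b c g f => icomp g f) (fun a => iid (Fi (simp a))).

Definition NK (X : graph) : psh Delta0.
Proof.
refine (@Psh Delta0 (fun n => gmor (simp n) X)
               (fun n m f x => gcomp x f) _ _).
- by move=> n x; apply: gmor_ext.
- by move=> a b c g f x; apply: gmor_ext.
Defined.

Definition NKmap (X Y : graph) (h : gmor X Y) : pnat (NK X) (NK Y).
Proof.
refine (@PNat Delta0 (NK X) (NK Y) (fun n x => gcomp h x) _).
by move=> n m f x; apply: gmor_ext.
Defined.

Definition NKT (A : igraph) : psh AT.
Proof.
refine (@Psh AT (fun n => imor (Fi (simp n)) A)
               (fun n m f x => icomp x f) _ _).
- by move=> n x; apply: imor_ext; apply: gmor_ext.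
- by move=> a b c g f x; apply: imor_ext; apply: gmor_ext.
Defined.

Definition restrictJ (X : psh AT) : psh Delta0.
Proof.
refine (@Psh Delta0 (pobj X) (fun n m f x => @pact AT X n m (Fmor f) x) _ _).
- move=> n x /=. rewrite (Fmor_id (simp n)). exact: (@pact_id AT X).
- move=> a b c g f x /=. rewrite (Fmor_comp g f). exact: (@pact_comp AT X).
Defined.

Definition is_K_nerve (P : psh Delta0) : Prop := exists G : graph, piso P (NK G).
Definition is_KT_nerve (X : psh AT) : Prop := exists A : igraph, piso X (NKT A).

Definition KT_dense : Prop :=
  forall A B : igraph,
    (forall h h' : imor A B,
        (forall n (x : imor (Fi (simp n)) A), icomp h x = icomp h' x) -> h = h')
    /\ (forall alpha : pnat (NKT A) (NKT B),
        exists h : imor A B, forall n (x : imor (Fi (simp n)) A), pcomp alpha x = icomp h x).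

Definition Delta0_nervous : Prop :=
  KT_dense /\ (forall X : psh AT, is_KT_nerve X <-> is_K_nerve (restrictJ X)).

(* T is the pointwise left Kan extension along K of TK: for every graph X,
   the canonical cocone (T f : T[n] -> T X)_{(n, f : [n] -> X)} over K/X
   is a colimit in Grph. *)
Definition Delta0_induced : Prop :=
  forall X : graph, forall Y : graph,
  forall c : forall n, gmor (simp n) X -> gmor (Tg (simp n)) Y,
    (forall n m (u : gmor (simp n) (simp m)) (f : gmor (simp m) X),
        gcomp (c m f) (Tmor u) = c n (gcomp f u)) ->
    exists h : gmor (Tg X) Y,
      (forall n f, gcomp h (Tmor f) = c n f) /\
      (forall h' : gmor (Tg X) Y, (forall n f, gcomp h' (Tmor f) = c n f) -> h' = h).

(* T has arities Delta_0: N_K T is the left Kan extension along K of N_K T K,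
   i.e. for every graph X the canonical cocone
   (N_K (T f) : N_K T[n] -> N_K T X)_{(n, f : [n] -> X)} is a colimit in
   the presheaf category [Delta_0^op, Set]. *)
Definition has_arities_Delta0 : Prop :=
  forall X : graph, forall Y : psh Delta0,
  forall c : forall n, gmor (simp n) X -> pnat (NK (Tg (simp n))) Y,
    (forall n m (u : gmor (simp n) (simp m)) (f : gmor (simp m) X) k (x : gmor (simp k) (Tg (simp n))),
        pcomp (c m f) (pcomp (NKmap (Tmor u)) x) = pcomp (c n (gcomp f u)) x) ->
    exists h : pnat (NK (Tg X)) Y,
      (forall n (f : gmor (simp n) X) k (x : gmor (simp k) (Tg (simp n))), pcomp h (pcomp (NKmap (Tmor f)) x) = pcomp (c n f) x) /\
      (forall h' : pnat (NK (Tg X)) Y,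
          (forall n (f : gmor (simp n) X) k (x : gmor (simp k) (Tg (simp n))), pcomp h' (pcomp (NKmap (Tmor f)) x) = pcomp (c n f) x) ->
          forall k (x : gmor (simp k) (Tg X)), pcomp h' x = pcomp h x).

From Stdlib Require Import ProofIrrelevance FunctionalExtensionality.
From mathcomp Require Import all_boot.
Set Implicit Arguments. Unset Strict Implicit. Unset Printing Implicit Defensive.

(** Every vertex and every
    edge of T X is the image of the vertex of T[0] or of one of the two edges
    of T[1] under some T f, which makes T the pointwise left Kan extension of
    TK along K.  Morphisms F[n] -> A of involutive graphs are graph maps
    [n] -> A, and on a presheaf over A_T whose restriction along J_T is the
    nerve of a graph G, the action of the flip of F[1] is an involution on the
    edges of G; this gives the density of K_T and the nerve characterisation.
    Arities fail because the arities condition would force every path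
    [k] -> T X to factor through some T f : T[n] -> T X, as its vertices and
    edges do; but in the cospan 0 -> 1 <- 2 the path 0 -> 1 -> 2 of T X, which
    runs along an edge and then backwards along the other, does not. *)

Definition I0_elim (T : Type) (e : 'I_0) : T.
Proof. by case: e. Defined.

Definition vertex_gmor (G : graph) (v : gV G) : gmor (simp 0) G.
Proof. refine (@GMor (simp 0) G (fun _ => v) (@I0_elim _) _ _); by case. Defined.

Definition edge_gmor (G : graph) (e : gE G) : gmor (simp 1) G.
Proof.
refine (@GMor (simp 1) G (fun v : 'I_2 => if val v == 0 then gsrc e else gtgt e)
   (fun _ => e) _ _); by case=> [[|k] Hk].
Defined.

Lemma gcompA (G H K L : graph) (h : gmor K L) (g : gmor H K) (f : gmor G H) :
  gcomp h (gcomp g f) = gcomp (gcomp h g) f.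
Proof. exact: gmor_ext. Qed.

Lemma gmor_ext_points (G H : graph) (x y : gmor G H) :
  (forall v, gcomp x (vertex_gmor v) = gcomp y (vertex_gmor v)) ->
  (forall e, gcomp x (edge_gmor e) = gcomp y (edge_gmor e)) -> x = y.
Proof.
move=> eqV eqE; apply: gmor_ext; apply: functional_extensionality.
- move=> v; exact: (congr1 (fun g : gmor (simp 0) H => mV g ord0) (eqV v)).
- move=> e; exact: (congr1 (fun g : gmor (simp 1) H => mE g ord0) (eqE e)).
Qed.

Lemma edge_gmor_eta (G : graph) (x : gmor (simp 1) G) : x = edge_gmor (mE x ord0).
Proof.
apply: gmor_ext => /=; apply: functional_extensionality.
- case=> [[|[|k]] Hk] //=.
  + by rewrite msrc; congr (mV x); apply: val_inj.
  + by rewrite mtgt; congr (mV x); apply: val_inj.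
- by move=> e; rewrite [e]ord1.
Qed.

Lemma gcomp_vertex_gmor (G H : graph) (g : gmor G H) v :
  gcomp g (vertex_gmor v) = vertex_gmor (mV g v).
Proof. by apply: gmor_ext => //=; apply: functional_extensionality; case. Qed.

Lemma gcomp_edge_gmor (G H : graph) (g : gmor G H) e :
  gcomp g (edge_gmor e) = edge_gmor (mE g e).
Proof.
apply: gmor_ext => //=; apply: functional_extensionality => v.
by case: ifP => _; rewrite ?msrc ?mtgt.
Qed.

Lemma Tmor_comp (X Y Z : graph) (g : gmor Y Z) (f : gmor X Y) :
  Tmor (gcomp g f) = gcomp (Tmor g) (Tmor f).
Proof. exact: (congr1 (@im _ _) (Fmor_comp g f)). Qed.

Lemma Tg_vertex_gmor (X : graph) (v : gV X) :
  vertex_gmor (G := Tg X) v = gcomp (Tmor (vertex_gmor v)) (vertex_gmor (G := Tg (simp 0)) ord0).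
Proof. by rewrite gcomp_vertex_gmor. Qed.

Lemma Tg_edge_gmor (X : graph) (e : gE (Tg X)) :
  exists (e1 : gE X) (e0 : gE (Tg (simp 1))),
    edge_gmor e = gcomp (Tmor (edge_gmor e1)) (edge_gmor e0).
Proof.
by case: e => e; exists e; [exists (inl ord0) | exists (inr ord0)]; rewrite gcomp_edge_gmor.
Qed.

Lemma gmor_Tg_ext (X Y : graph) (h h' : gmor (Tg X) Y) :
  (forall v, gcomp h (Tmor (vertex_gmor v)) = gcomp h' (Tmor (vertex_gmor v))) ->
  (forall e, gcomp h (Tmor (edge_gmor e)) = gcomp h' (Tmor (edge_gmor e))) -> h = h'.
Proof.
move=> eqV eqE; apply: gmor_ext_points => [v|e].
- by rewrite Tg_vertex_gmor !gcompA eqV.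
- by have [e1 [e0 ->]] := Tg_edge_gmor e; rewrite !gcompA eqE.
Qed.

Section InducedCocone.

Variables (X Y : graph) (c : forall n, gmor (simp n) X -> gmor (Tg (simp n)) Y).
Hypothesis c_compat : forall n m (u : gmor (simp n) (simp m)) (f : gmor (simp m) X),
  gcomp (c f) (Tmor u) = c (gcomp f u).

Lemma cocone_vertex n (f : gmor (simp n) X) i :
  mV (c f) i = mV (c (vertex_gmor (mV f i))) ord0.
Proof. by rewrite -gcomp_vertex_gmor -c_compat. Qed.

Lemma cocone_edge n (f : gmor (simp n) X) j (e : gE (Tg (simp 1))) :
  mE (c f) (mE (Tmor (edge_gmor j)) e) = mE (c (edge_gmor (mE f j))) e.
Proof. by rewrite -gcomp_edge_gmor -c_compat. Qed.

Definition induced_mor : gmor (Tg X) Y.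
Proof.
refine (@GMor (Tg X) Y (fun v : gV X => mV (c (vertex_gmor v)) ord0)
  (fun e => match e with inl e => mE (c (edge_gmor e)) (inl ord0)
                       | inr e => mE (c (edge_gmor e)) (inr ord0) end) _ _);
  by case=> e; rewrite ?msrc ?mtgt [LHS]cocone_vertex.
Defined.

Lemma induced_mor_Tmor n (f : gmor (simp n) X) : gcomp induced_mor (Tmor f) = c f.
Proof.
apply: gmor_ext; apply: functional_extensionality => /=.
- by move=> i; rewrite [RHS]cocone_vertex.
- by case=> j; rewrite -cocone_edge.
Qed.

End InducedCocone.

Lemma T_Delta0_induced : Delta0_induced.
Proof.
move=> X Y c c_compat; exists (induced_mor c_compat).
split=> [n f | h' h'_Tmor]; first exact: induced_mor_Tmor.
by apply: gmor_Tg_ext => [v|e]; rewrite h'_Tmor induced_mor_Tmor.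
Qed.

Lemma tgt_inv (A : igraph) (e : gE A) : gtgt (inv e) = gsrc e.
Proof. by rewrite -src_inv invK. Qed.

Definition restr_free (G : graph) (A : igraph) (x : imor (Fi G) A) : gmor G A :=
  @GMor G A (mV x) (fun e => mE x (inl e))
    (fun e => msrc x (inl e)) (fun e => mtgt x (inl e)).

Definition extend_free (G : graph) (A : igraph) (y : gmor G A) : imor (Fi G) A.
Proof.
unshelve refine (@IMor (Fi G) A
  (@GMor (Tg G) A (mV y)
     (fun e => match e with inl e => mE y e | inr e => inv (mE y e) end) _ _) _).
- by case=> e /=; [exact: msrc | rewrite src_inv; exact: mtgt].
- by case=> e /=; [exact: mtgt | rewrite tgt_inv; exact: msrc].
- by case=> e /=; rewrite ?invK.
Defined.

Lemma imor_free_ext (G : graph) (A : igraph) (x y : imor (Fi G) A) :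
  mV x = mV y -> (forall e, mE x (inl e) = mE y (inl e)) -> x = y.
Proof.
move=> eqV eqE; apply: imor_ext; apply: gmor_ext => //.
apply: functional_extensionality; case=> e; first exact: eqE.
by move: (im_inv x (inl e)) (im_inv y (inl e)) => /= -> ->; rewrite eqE.
Qed.

Lemma extend_freeK (G : graph) (A : igraph) : cancel (@extend_free G A) (@restr_free G A).
Proof. by move=> y; apply: gmor_ext. Qed.

Lemma restr_freeK (G : graph) (A : igraph) : cancel (@restr_free G A) (@extend_free G A).
Proof. by move=> x; apply: imor_free_ext. Qed.

Definition vertex_imor (A : igraph) (v : gV A) : imor (Fi (simp 0)) A :=
  extend_free (vertex_gmor v).

Definition edge_imor (A : igraph) (e : gE A) : imor (Fi (simp 1)) A :=
  extend_free (edge_gmor e).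

Lemma imor_ext_points (A B : igraph) (h h' : imor A B) :
  (forall v, icomp h (vertex_imor v) = icomp h' (vertex_imor v)) ->
  (forall e, icomp h (edge_imor e) = icomp h' (edge_imor e)) -> h = h'.
Proof.
move=> eqV eqE; apply: imor_ext; apply: gmor_ext; apply: functional_extensionality.
- move=> v; exact: (congr1 (fun g : imor (Fi (simp 0)) B => mV g ord0) (eqV v)).
- move=> e; exact: (congr1 (fun g : imor (Fi (simp 1)) B => mE g (inl ord0)) (eqE e)).
Qed.

Lemma edge_imor_eta (A : igraph) (x : imor (Fi (simp 1)) A) : x = edge_imor (mE x (inl ord0)).
Proof. by rewrite -[x]restr_freeK [restr_free x]edge_gmor_eta. Qed.

Lemma icomp_vertex_imor (A B : igraph) (g : imor A B) v :
  icomp g (vertex_imor v) = vertex_imor (mV g v).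
Proof. by apply: imor_free_ext => //; case. Qed.

Lemma icomp_edge_imor (A B : igraph) (g : imor A B) e :
  icomp g (edge_imor e) = edge_imor (mE g e).
Proof.
apply: imor_free_ext => [|//]; apply: functional_extensionality => v /=.
by case: ifP => _; rewrite ?msrc ?mtgt.
Qed.

Lemma Fmor_vertex_gmor n (i : 'I_n.+1) :
  Fmor (vertex_gmor (G := simp n) i) = vertex_imor (A := Fi (simp n)) i.
Proof. by apply: imor_free_ext => //; case. Qed.

Lemma Fmor_edge_gmor n (j : 'I_n) :
  Fmor (edge_gmor (G := simp n) j) = edge_imor (A := Fi (simp n)) (inl j).
Proof. by apply: imor_free_ext. Qed.

Definition flip1 : imor (Fi (simp 1)) (Fi (simp 1)) := edge_imor (A := Fi (simp 1)) (inr ord0).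

Lemma flip1K : icomp flip1 flip1 = iid (Fi (simp 1)).
Proof. by rewrite /flip1 icomp_edge_imor [iid _]edge_imor_eta. Qed.

Lemma edge_imor_flip1 (A : igraph) (e : gE A) : icomp (edge_imor e) flip1 = edge_imor (inv e).
Proof. by rewrite /flip1 icomp_edge_imor. Qed.

Section NKTFull.

Variables (A B : igraph) (alpha : pnat (NKT A) (NKT B)).

Lemma alpha_icomp n m (f : imor (Fi (simp n)) (Fi (simp m))) (x : imor (Fi (simp m)) A) :
  pcomp alpha (icomp x f) = icomp (pcomp alpha x) f.
Proof. exact: pnatural. Qed.

Definition alpha_vertex (v : gV A) : gV B := mV (pcomp alpha (vertex_imor v)) ord0.

Definition alpha_edge (e : gE A) : gE B := mE (pcomp alpha (edge_imor e)) (inl ord0).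

Lemma mV_alpha n (x : imor (Fi (simp n)) A) i : mV (pcomp alpha x) i = alpha_vertex (mV x i).
Proof. by rewrite /alpha_vertex -icomp_vertex_imor alpha_icomp. Qed.

Lemma mE_alpha n (x : imor (Fi (simp n)) A) j :
  mE (pcomp alpha x) (inl j) = alpha_edge (mE x (inl j)).
Proof. by rewrite /alpha_edge -icomp_edge_imor alpha_icomp. Qed.

Lemma alpha_edge_inv e : alpha_edge (inv e) = inv (alpha_edge e).
Proof.
rewrite /alpha_edge -edge_imor_flip1 alpha_icomp.
exact: (im_inv (pcomp alpha (edge_imor e)) (inl ord0)).
Qed.

Definition alpha_imor : imor A B.
Proof.
refine (@IMor A B (@GMor A B alpha_vertex alpha_edge _ _) alpha_edge_inv) => e.
- by rewrite /alpha_edge msrc mV_alpha.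
- by rewrite /alpha_edge mtgt mV_alpha.
Defined.

Lemma alpha_imorE n (x : imor (Fi (simp n)) A) : pcomp alpha x = icomp alpha_imor x.
Proof.
apply: imor_free_ext => [|j]; last exact: mE_alpha.
by apply: functional_extensionality => i; rewrite mV_alpha.
Qed.

End NKTFull.

Lemma KT_is_dense : KT_dense.
Proof.
move=> A B; split=> [h h' eq_h | alpha]; last by exists (alpha_imor alpha); exact: alpha_imorE.
by apply: imor_ext_points => [v|e]; apply: eq_h.
Qed.

Lemma piso_of_bijective (C : precat) (P Q : psh C) (a : pnat P Q)
    (b : forall n, pobj Q n -> pobj P n) :
  (forall n (x : pobj P n), b n (pcomp a x) = x) ->
  (forall n (y : pobj Q n), pcomp a (b n y) = y) -> piso P Q.
Proof.
move=> abK baK.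
have b_natural n m (f : hom C n m) y : b n (pact f y) = pact f (b m y).
  by rewrite -{1}[y]baK -pnatural abK.
by exists a, (PNat b_natural).
Qed.

Definition pnat_comp (C : precat) (P Q R : psh C) (b : pnat Q R) (a : pnat P Q) : pnat P R.
Proof.
refine (@PNat C P R (fun n x => pcomp b (pcomp a x)) _).
by move=> n m f x; rewrite !pnatural.
Defined.

Lemma piso_trans (C : precat) (P Q R : psh C) : piso P Q -> piso Q R -> piso P R.
Proof.
move=> [a [b [abK baK]]] [c [d [cdK dcK]]].
by exists (pnat_comp c a), (pnat_comp b d); split=> n x /=; rewrite ?cdK ?abK ?dcK ?baK.
Qed.

Definition restrictJ_pnat (X Y : psh AT) (a : pnat X Y) : pnat (restrictJ X) (restrictJ Y).
Proof.
refine (@PNat Delta0 (restrictJ X) (restrictJ Y) (fun n x => @pcomp AT X Y a n x) _).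
move=> n m f x /=; exact: (@pnatural AT X Y a).
Defined.

Lemma piso_restrictJ (X Y : psh AT) : piso X Y -> piso (restrictJ X) (restrictJ Y).
Proof.
by move=> [a [b [abK baK]]]; exists (restrictJ_pnat a), (restrictJ_pnat b).
Qed.

Lemma restrictJ_NKT_iso (A : igraph) : piso (restrictJ (NKT A)) (NK (ig A)).
Proof.
pose a := @PNat Delta0 (restrictJ (NKT A)) (NK (ig A)) (fun n x => restr_free x)
  (fun n m f x => gmor_ext erefl erefl).
apply: (@piso_of_bijective _ _ _ a (fun n y => extend_free y)) => n x.
- exact: restr_freeK.
- exact: extend_freeK.
Qed.

Section NerveOfRestriction.

Variables (X : psh AT) (G : graph).
Variables (a : pnat (restrictJ X) (NK G)) (b : pnat (NK G) (restrictJ X)).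

Definition to_NK n (x : pobj X n) : gmor (simp n) G := pcomp a x.

Definition of_NK n (y : gmor (simp n) G) : pobj X n := pcomp b y.

Hypotheses (to_NKK : forall n, cancel (@to_NK n) (@of_NK n))
           (of_NKK : forall n, cancel (@of_NK n) (@to_NK n)).

Let pact_comp_AT := @pact_comp AT X.

Lemma to_NK_Fmor n m (f : gmor (simp n) (simp m)) (x : pobj X m) :
  to_NK (@pact AT X n m (Fmor f) x) = gcomp (to_NK x) f.
Proof. exact: (pnatural a f x). Qed.

Lemma to_NK_vertex_imor n (x : pobj X n) i :
  mV (to_NK (@pact AT X 0 n (vertex_imor (A := Fi (simp n)) i) x)) ord0 = mV (to_NK x) i.
Proof. by rewrite -Fmor_vertex_gmor to_NK_Fmor gcomp_vertex_gmor. Qed.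

Lemma to_NK_edge_inl n (x : pobj X n) j :
  mE (to_NK (@pact AT X 1 n (edge_imor (A := Fi (simp n)) (inl j)) x)) ord0 = mE (to_NK x) j.
Proof. by rewrite -Fmor_edge_gmor to_NK_Fmor gcomp_edge_gmor. Qed.

Definition nerve_inv (e : gE G) : gE G :=
  mE (to_NK (@pact AT X 1 1 flip1 (of_NK (edge_gmor e)))) ord0.

Lemma to_NK_flip1 (z : pobj X 1) :
  mE (to_NK (@pact AT X 1 1 flip1 z)) ord0 = nerve_inv (mE (to_NK z) ord0).
Proof. by rewrite /nerve_inv -edge_gmor_eta to_NKK. Qed.

Lemma nerve_invK e : nerve_inv (nerve_inv e) = e.
Proof.
by rewrite {2}/nerve_inv -to_NK_flip1 -pact_comp_AT /= flip1K (@pact_id AT X) of_NKK.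
Qed.

Lemma src_nerve_inv e : gsrc (nerve_inv e) = gtgt e.
Proof.
by rewrite /nerve_inv msrc -to_NK_vertex_imor -pact_comp_AT /= icomp_vertex_imor
  to_NK_vertex_imor of_NKK.
Qed.

Definition nerve_igraph : igraph := IGraph nerve_invK src_nerve_inv.

Lemma to_NK_edge_imor n (x : pobj X n) (e : gE (Tg (simp n))) :
  mE (to_NK (@pact AT X 1 n (edge_imor (A := Fi (simp n)) e) x)) ord0
  = mE (extend_free (A := nerve_igraph) (to_NK x)) e.
Proof.
case: e => j /=; first exact: to_NK_edge_inl.
have -> : edge_imor (A := Fi (simp n)) (inr j) = icomp (edge_imor (A := Fi (simp n)) (inl j)) flip1.
  by rewrite edge_imor_flip1.
by rewrite pact_comp_AT to_NK_flip1 to_NK_edge_inl.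
Qed.

Lemma extend_to_NK_pact n m (g : imor (Fi (simp n)) (Fi (simp m))) (x : pobj X m) :
  extend_free (A := nerve_igraph) (to_NK (@pact AT X n m g x))
  = icomp (extend_free (A := nerve_igraph) (to_NK x)) g.
Proof.
apply: imor_free_ext => [|j] /=.
- apply: functional_extensionality => i.
  by rewrite -to_NK_vertex_imor -pact_comp_AT /= icomp_vertex_imor to_NK_vertex_imor.
- by rewrite -to_NK_edge_inl -pact_comp_AT /= icomp_edge_imor to_NK_edge_imor.
Qed.

Lemma nerve_igraph_iso : piso X (NKT nerve_igraph).
Proof.
pose phi := @PNat AT X (NKT nerve_igraph)
  (fun n x => extend_free (A := nerve_igraph) (to_NK x)) (fun n m g x => extend_to_NK_pact g x).
apply: (@piso_of_bijective _ _ _ phi (fun n y => of_NK (restr_free y))) => n x /=.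
- by rewrite (extend_freeK (A := nerve_igraph)) to_NKK.
- by rewrite of_NKK (restr_freeK (A := nerve_igraph)).
Qed.

End NerveOfRestriction.

Lemma KT_nerve_iff (X : psh AT) : is_KT_nerve X <-> is_K_nerve (restrictJ X).
Proof.
split=> [[A XA] | [G [a [b [abK baK]]]]].
- by exists (ig A); apply: piso_trans (restrictJ_NKT_iso A); exact: piso_restrictJ.
- by exists (nerve_igraph abK baK); exact: nerve_igraph_iso.
Qed.

Lemma T_Delta0_nervous : Delta0_nervous.
Proof. by split; [exact: KT_is_dense | exact: KT_nerve_iff]. Qed.

Definition factorizable (X : graph) k (x : gmor (simp k) (Tg X)) : Prop :=
  exists n (f : gmor (simp n) X) (y : gmor (simp k) (Tg (simp n))), x = gcomp (Tmor f) y.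

Lemma factorizable_gcomp (X : graph) k l (x : gmor (simp l) (Tg X)) (u : gmor (simp k) (simp l)) :
  factorizable x -> factorizable (gcomp x u).
Proof. by move=> [n [f [y ->]]]; exists n, f, (gcomp y u); rewrite gcompA. Qed.

Lemma vertex_factorizable (X : graph) (v : gV X) : factorizable (vertex_gmor (G := Tg X) v).
Proof. by exists 0, (vertex_gmor v), (vertex_gmor (G := Tg (simp 0)) ord0); rewrite Tg_vertex_gmor. Qed.

Lemma edge_factorizable (X : graph) (e : gE (Tg X)) : factorizable (edge_gmor e).
Proof. by have [e1 [e0 ->]] := Tg_edge_gmor e; exists 1, (edge_gmor e1), (edge_gmor e0). Qed.

Lemma sig_ext (T : Type) (P : T -> Prop) (x y : {t | P t}) : proj1_sig x = proj1_sig y -> x = y.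
Proof. by case: x; case: y => /= y Py x Px exy; subst; rewrite (proof_irrelevance _ Px Py). Qed.

Definition factorizable_paths (X : graph) : psh Delta0.
Proof.
refine (@Psh Delta0 (fun k => {x : gmor (simp k) (Tg X) | factorizable x})
   (fun k l u x => exist _ (gcomp (proj1_sig x) u) (factorizable_gcomp u (proj2_sig x))) _ _).
- by move=> n x; apply: sig_ext; apply: gmor_ext.
- by move=> n m p g f x; apply: sig_ext; apply: gmor_ext.
Defined.

Definition factorizable_cocone (X : graph) n (f : gmor (simp n) X) :
  pnat (NK (Tg (simp n))) (factorizable_paths X).
Proof.
refine (@PNat Delta0 (NK (Tg (simp n))) (factorizable_paths X)
   (fun k y => exist _ (gcomp (Tmor f) y) (ex_intro _ n (ex_intro _ f (ex_intro _ y erefl)))) _).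
by move=> k l u x; apply: sig_ext; apply: gmor_ext.
Defined.

Lemma factorizable_cocone_compat (X : graph) n m (u : gmor (simp n) (simp m))
    (f : gmor (simp m) X) k (x : gmor (simp k) (Tg (simp n))) :
  pcomp (factorizable_cocone f) (pcomp (NKmap (Tmor u)) x)
  = pcomp (factorizable_cocone (gcomp f u)) x.
Proof. by apply: sig_ext; rewrite /= Tmor_comp gcompA. Qed.

Lemma arities_factorizable : has_arities_Delta0 ->
  forall (X : graph) k (x : gmor (simp k) (Tg X)), factorizable x.
Proof.
move=> arities X k x.
have [h [h_cocone _]] := arities X _ _ (@factorizable_cocone_compat X).
have h_fix l (z : gmor (simp l) (Tg X)) : factorizable z -> proj1_sig (pcomp h z) = z.
  by move=> [n [f [y ->]]]; exact: (congr1 (@proj1_sig _ _) (h_cocone n f l y)).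
have h_natural l (u : gmor (simp l) (simp k)) :
    proj1_sig (pcomp h (gcomp x u)) = gcomp (proj1_sig (pcomp h x)) u.
  exact: (congr1 (@proj1_sig _ _) (pnatural h u x)).
suff -> : x = proj1_sig (pcomp h x) by exact: proj2_sig.
apply: gmor_ext_points => [i|j]; rewrite -h_natural h_fix //.
- by rewrite gcomp_vertex_gmor; exact: vertex_factorizable.
- by rewrite gcomp_edge_gmor; exact: edge_factorizable.
Qed.

Definition cospan : graph := @Graph nat bool (fun b => if b then 0 else 2) (fun _ => 1).

Definition zigzag : gmor (simp 2) (Tg cospan).
Proof.
refine (@GMor (simp 2) (Tg cospan) (fun v : 'I_3 => val v)
  (fun j : 'I_2 => if val j == 0 then inl true else inr false) _ _);
  by case=> [[|[|k]] Hk].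
Defined.

Lemma zigzag_not_factorizable : ~ factorizable zigzag.
Proof.
move=> [n [f [y zigzagE]]].
have edgeE j := congr1 (fun g : gmor (simp 2) (Tg cospan) => mE g j) zigzagE.
have adjacent : gtgt (mE y ord0) = gsrc (mE y (lift ord0 ord0)).
  by rewrite mtgt msrc; congr (mV y); apply: val_inj.
(* [y] would map the two edges to [inl k] and [inr k] for the one edge [k] of [n]
   into the middle vertex, and [f] would map [k] to both edges of the cospan. *)
move: (edgeE ord0) (edgeE (lift ord0 ord0)) adjacent => /=.
case: (mE y ord0) => // k1; case: (mE y _) => // k2 [f_k1] [f_k2] /= /lift_inj k12.
by move: f_k2; rewrite -k12 -f_k1.
Qed.

Lemma T_not_arities : ~ has_arities_Delta0.
Proof. by move/arities_factorizable/(_ _ _ zigzag); exact: zigzag_not_factorizable. Qed.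

Theorem proposition7p6 :
  Delta0_nervous /\ Delta0_induced /\ ~ has_arities_Delta0.
Proof. by split; [exact: T_Delta0_nervous | split; [exact: T_Delta0_induced | exact: T_not_arities]]. Qed.
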